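(* Let $\mathcal N=(G,\beta,r)$ be a potential-based flow network with $G=(V,A)$, let $T^+,T^-\subseteq V$ be disjoint, $T=T^+\cup T^-$, and let $b\in B(T)$. Let $f$ be a potential-based $b$-transshipment with corresponding node potentials $\pi\in[0,\bar\pi]^V$, where $\bar\pi>0$. Then for every $X\subseteq T$ with $b(X)\ge0$ there is a potential-based $b'$-transshipment $f'$ in $\mathcal N$, for some balanced $b'\in\mathbb{R}^V$, with corresponding potentials $\pi'\in[0,\bar\pi]^V$, such that $$\{v: b'_v>0\}\subseteq T^+\cap X,\qquad \{v:b'_v<0\}\subseteq T^-\setminus X,\qquad \sum_{v\in T^+\cap X}b'_v=b(X).$$
   Context: A potential-based flow network $\mathcal N=(G,\beta,r)$ consists of a weakly connected directed multigraph $G=(V,A)$ without loops, resistances $\beta\in\mathbb{R}^A_{>0}$ and a degree $r>0$. For a balanced vector $b\in\mathbb{R}^V$ ($\sum_v b_v=0$), a potential-based $b$-transshipment is a flow $f\in\mathbb{R}^A$ together with potentials $\pi\in\mathbb{R}^V$ such that $\pi_u-\pi_v=\beta_a\,\mathrm{sign}(f_a)|f_a|^r$ for every arc $a=(u,v)$ and $\sum_{a\in\delta^+(v)}f_a-\sum_{a\in\delta^-(v)}f_a=b_v$ for all $v\in V$ ($\delta^+(v)$, $\delta^-(v)$: arcs leaving, resp. entering, $v$). $B(T)$ is the set of balanced $b\in\mathbb{R}^V$ with $b_v\ge0$ for $v\in T^+$, $b_v\le0$ for $v\in T^-$, and $b_v=0$ for $v\notin T$. For $X\subseteq T$, $b(X)=\sum_{v\in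 X}b_v$. *)

From HB Require Import structures.
From mathcomp Require Import all_boot all_order all_algebra.
From mathcomp Require Import reals exp.
Set Implicit Arguments. Unset Strict Implicit. Unset Printing Implicit Defensive.
Import Order.TTheory GRing.Theory Num.Theory.
Local Open Scope ring_scope.

Section Net.
Variables (R : realType) (V A : finType) (tl hd : A -> V).

Definition und_adj : rel V :=
  fun x y => [exists a : A, ((tl a == x) && (hd a == y)) || ((tl a == y) && (hd a == x))].
Definition weakly_connected : Prop := forall u v : V, connect und_adj u v.
Definition loopless : Prop := forall a : A, tl a != hd a.

Definition pb_network (beta : A -> R) (r : R) : Prop :=
  [/\ weakly_connected, loopless, (forall a, 0 < beta a) & 0 < r].

Definition balanced (b : V -> R) : Prop := \sum_(v : V) b v = 0.

Definition netout (f : A -> R) (v : V) : R :=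
  \sum_(a : A | tl a == v) f a - \sum_(a : A | hd a == v) f a.

Definition pb_transshipment (beta : A -> R) (r : R) (b : V -> R)
    (f : A -> R) (pi : V -> R) : Prop :=
  (forall a : A, pi (tl a) - pi (hd a) = beta a * Num.sg (f a) * powR `|f a| r) /\
  (forall v : V, netout f v = b v).

Definition in_BT (Tp Tm : {set V}) (b : V -> R) : Prop :=
  [/\ balanced b,
      (forall v, v \in Tp -> 0 <= b v),
      (forall v, v \in Tm -> b v <= 0) &
      (forall v, v \notin Tp :|: Tm -> b v = 0)].

Definition bsum (b : V -> R) (X : {set V}) : R := \sum_(v in X) b v.

End Net.

From mathcomp Require Import boolp classical_sets reals.
From mathcomp Require Import all_boot all_order all_algebra.
From mathcomp Require Import exp lra.
Set Implicit Arguments. Unset Strict Implicit. Unset Printing Implicit Defensive.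
Import Order.TTheory GRing.Theory Num.Theory.
Local Open Scope ring_scope.

(* Let S = Tp :&: X and K = Tm :\: X. Perron's method (the supremum of all
   subsolutions) gives potentials psi with values in [0, 1], equal to 1 on S
   and to 0 on K, whose flow is conserved outside S :|: K; by monotonicity of
   the arc law its supply is nonnegative on S and nonpositive on K. Scaling the
   potentials by L scales the flow by L^(1/r). For L > pibar the cut
   U = {pi < L psi} contains S and misses K, and comparing f with the flow of
   L psi arc by arc across U gives b(X) <= b(U) <= L^(1/r) F, where F is the
   supply of psi on S. Hence L0 = (b(X) / F)^r <= pibar, and L0 psi are the
   required potentials. *)

Section SignedPower.
Variable R : realType.
Implicit Types s x y c : R.

Definition spow s x : R := Num.sg x * powR `|x| s.

Lemma spow0 s : spow s 0 = 0.
Proof. by rewrite /spow sgr0 mul0r. Qed.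

Lemma spowN s x : spow s (- x) = - spow s x.
Proof. by rewrite /spow sgrN normrN mulNr. Qed.

Lemma spow_ge0E s x : 0 < s -> 0 <= x -> spow s x = powR x s.
Proof.
move=> s_gt0; rewrite le_eqVlt => /predU1P[<-|x_gt0].
  by rewrite spow0 powR0 ?gt_eqF.
by rewrite /spow gtr0_sg // mul1r gtr0_norm.
Qed.

Lemma spow_lt s : 0 < s -> {homo spow s : x y / x < y}.
Proof.
move=> s_gt0.
have nneg x y : 0 <= x -> x < y -> spow s x < spow s y.
  move=> x_ge0 xy; have y_ge0 := le_trans x_ge0 (ltW xy).
  by rewrite !spow_ge0E // gt0_ltr_powR.
move=> x y xy; have [x_ge0|x_lt0] := leP 0 x; first exact: nneg.
have [y_ge0|y_lt0] := leP 0 y.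
  apply: (@lt_le_trans _ _ 0); last by rewrite spow_ge0E ?powR_ge0.
  by rewrite -[x]opprK spowN oppr_lt0 -(spow0 s) nneg // oppr_gt0.
rewrite -[x]opprK -[y]opprK (spowN s (- x)) (spowN s (- y)) ltrN2.
by rewrite nneg ?ltrN2 // oppr_ge0 ltW.
Qed.

Lemma spow_le s : 0 < s -> {mono spow s : x y / x <= y}.
Proof. by move=> s_gt0; apply: le_mono; apply: spow_lt. Qed.

Lemma spowK s : s != 0 -> cancel (spow s) (spow s^-1).
Proof.
move=> s_neq0 x; have [->|x_neq0] := eqVneq x 0; first by rewrite !spow0.
have p_gt0 : 0 < powR `|x| s by rewrite powR_gt0 // normr_gt0.
rewrite /spow sgrM sgr_id (gtr0_sg p_gt0) mulr1 normrM normr_sg x_neq0 mul1r.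
by rewrite (gtr0_norm p_gt0) -powRrM mulfV // powRr1 // -numEsg.
Qed.

Lemma spowVK s : s != 0 -> cancel (spow s^-1) (spow s).
Proof. by move=> s_neq0 y; rewrite -{1}(invrK s) spowK ?invr_eq0. Qed.

Lemma spowMl s c x : 0 < s -> 0 <= c -> spow s (c * x) = powR c s * spow s x.
Proof.
move=> s_gt0; rewrite le_eqVlt => /predU1P[<-|c_gt0].
  by rewrite mul0r spow0 powR0 ?gt_eqF // mul0r.
rewrite /spow sgrM gtr0_sg // mul1r normrM gtr0_norm //.
by rewrite powRM ?normr_ge0 ?ltW // mulrCA.
Qed.

End SignedPower.

Lemma scaling_factor (R : realType) (c F m r : R) :
  0 < r -> 0 <= c -> 0 <= F -> 0 <= m ->
  (forall L, m < L -> c <= powR L r^-1 * F) ->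
  c / F * F = c /\ powR (c / F) r <= m.
Proof.
(* If [F = 0] the bound forces [c = 0], and [c / F = 0] by the convention [x / 0 = 0]. *)
move=> r_gt0 c_ge0; rewrite le_eqVlt => /predU1P[<-|F_gt0] m_ge0 bound.
  have c0 : c = 0.
    by apply/le_anti; rewrite c_ge0 andbT (le_trans (bound (m + 1) _)) ?mulr0 ?ltrDl.
  by split; rewrite c0 !mul0r ?powR0 ?gt_eqF.
split; first by rewrite divfK ?gt_eqF.
apply/ler_addgt0Pr => e e_gt0.
have := bound (m + e); rewrite ltrDl -ler_pdivrMr // => /(_ e_gt0) le_root.
have -> : m + e = powR (powR (m + e) r^-1) r.
  by rewrite -powRrM mulVf ?gt_eqF // powRr1 //; lra.
by apply: (ge0_ler_powR (ltW r_gt0)); rewrite ?nnegrE ?powR_ge0 ?divr_ge0 ?(ltW F_gt0).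
Qed.

Section Continuity.
Variable R : realFieldType.
Implicit Types (k : R -> R) (t c : R).

Definition cont_at k t : Prop := forall e, 0 < e ->
  exists2 d, 0 < d & forall x, `|x - t| < d -> `|k x - k t| < e.

Lemma eq_cont_at k1 k2 t : k1 =1 k2 -> cont_at k1 t -> cont_at k2 t.
Proof.
move=> k12 k1c e /k1c[d d_gt0 near]; exists d => // x; rewrite -!k12; exact: near.
Qed.

Lemma cont_at_cst c t : cont_at (fun=> c) t.
Proof. by move=> e e_gt0; exists 1 => // x _; rewrite subrr normr0. Qed.

Lemma cont_atD k1 k2 t :
  cont_at k1 t -> cont_at k2 t -> cont_at (fun x => k1 x + k2 x) t.
Proof.
move=> k1c k2c e e_gt0; have e2_gt0 : 0 < e / 2 by rewrite divr_gt0.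
have [d1 d1_gt0 near1] := k1c _ e2_gt0; have [d2 d2_gt0 near2] := k2c _ e2_gt0.
exists (Num.min d1 d2) => [|x]; first by rewrite lt_min d1_gt0.
rewrite lt_min => /andP[/near1 near1x /near2 near2x].
rewrite opprD addrACA (splitr e); apply: le_lt_trans (ler_normD _ _) _.
exact: ltrD.
Qed.

Lemma cont_at_sum (I : Type) (s : seq I) (P : pred I) (k : I -> R -> R) t :
  (forall i, P i -> cont_at (k i) t) ->
  cont_at (fun x => \sum_(i <- s | P i) k i x) t.
Proof.
move=> kc; elim: s => [|i s IH].
  by apply: eq_cont_at (cont_at_cst 0 t) => x; rewrite big_nil.
have [Pi|nPi] := boolP (P i).
  by apply: eq_cont_at (cont_atD (kc i Pi) IH) => x; rewrite big_cons Pi.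
by apply: eq_cont_at IH => x; rewrite big_cons (negbTE nPi).
Qed.

Lemma cont_at_inc_can (f g : R -> R) t :
  {homo f : x y / x < y} -> cancel g f -> cont_at f t.
Proof.
move=> f_inc gK e e_gt0; have f_le := le_mono f_inc.
pose a := g (f t - e); pose b := g (f t + e).
have a_lt : a < t by rewrite ltNge -f_le -ltNge gK gtrBl.
have lt_b : t < b by rewrite ltNge -f_le -ltNge gK ltrDl.
exists (Num.min (t - a) (b - t)) => [|x]; first by rewrite lt_min !subr_gt0 a_lt.
rewrite lt_min !ltr_norml => /andP[/andP[xa _] /andP[_ xb]].
have /f_inc : a < x by lra.
have /f_inc : x < b by lra.
rewrite !gK; lra.
Qed.

Lemma cont_at_gt k t c : cont_at k t -> c < k t ->
  exists2 d, 0 < d & forall x, `|x - t| < d -> c < k x.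
Proof.
move=> kc ck; have [|d d_gt0 near] := kc (k t - c); first by rewrite subr_gt0.
by exists d => // x /near; rewrite ltr_norml => /andP[? _]; lra.
Qed.

Lemma cont_at_lt k t c : cont_at k t -> k t < c ->
  exists2 d, 0 < d & forall x, `|x - t| < d -> k x < c.
Proof.
move=> kc kc0; have [|d d_gt0 near] := kc (c - k t); first by rewrite subr_gt0.
by exists d => // x /near; rewrite ltr_norml => /andP[_ ?]; lra.
Qed.

End Continuity.

Section PotentialFlow.
Variables (R : realType) (V A : finType) (tl hd : A -> V) (beta : A -> R) (r : R).

Local Notation netout := (netout tl hd).

Lemma sum_fibers_in (h : A -> V) (U : {set V}) (F : A -> R) :
  \sum_(w in U) \sum_(a | h a == w) F a = \sum_a F a * (h a \in U)%:R.
Proof.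
rewrite [RHS](bigID (fun a => h a \in U)) /= [X in _ + X]big1 => [|a /negbTE->]; last first.
  by rewrite mulr0.
rewrite addr0 [RHS](partition_big h (mem U)) //=; apply: eq_bigr => w wU.
apply: eq_big => [a|a /eqP->]; last by rewrite wU mulr1.
by case: eqP => [->|]; rewrite ?wU ?andbF.
Qed.

Lemma netout_setE (f : A -> R) (U : {set V}) :
  \sum_(w in U) netout f w = \sum_a f a * ((tl a \in U)%:R - (hd a \in U)%:R).
Proof. by rewrite sumrB !sum_fibers_in -sumrB; apply: eq_bigr => a _; rewrite mulrBr. Qed.

Lemma balanced_netout (f : A -> R) : balanced (netout f).
Proof.
have := netout_setE f [set: V]; under eq_bigl do rewrite in_setT.
by rewrite /balanced => ->; rewrite big1 // => a _; rewrite !in_setT subrr mulr0.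
Qed.

Lemma netoutZ (c : R) (f : A -> R) v : netout (fun a => c * f a) v = c * netout f v.
Proof. by rewrite /netout mulrBr !mulr_sumr. Qed.

Hypotheses (beta_gt0 : forall a, 0 < beta a) (r_gt0 : 0 < r).

Definition pot_flow (p : V -> R) (a : A) : R := spow r^-1 ((p (tl a) - p (hd a)) / beta a).

Definition supply (p : V -> R) : V -> R := netout (pot_flow p).

Lemma pot_flow_le (p q : V -> R) a :
  p (tl a) - p (hd a) <= q (tl a) - q (hd a) -> pot_flow p a <= pot_flow q a.
Proof. by move=> le_pq; rewrite /pot_flow spow_le ?invr_gt0 // ler_pM2r ?invr_gt0. Qed.

Lemma pot_flow_transshipment (p : V -> R) :
  pb_transshipment tl hd beta r (supply p) (pot_flow p) p.
Proof.
split=> // a; rewrite -mulrA -/(spow r (pot_flow p a)).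
by rewrite spowVK ?gt_eqF // mulrC divfK ?gt_eqF.
Qed.

Lemma pot_flowE (b : V -> R) (f : A -> R) (pi : V -> R) :
  pb_transshipment tl hd beta r b f pi -> f = pot_flow pi.
Proof.
move=> [pot _]; apply: funext => a.
rewrite /pot_flow pot -[beta a * _ * _]mulrA -/(spow r (f a)) mulrC mulKf ?gt_eqF //.
by rewrite spowK ?gt_eqF.
Qed.

Lemma supply_le (p q : V -> R) v :
  (forall w, q w - p w <= q v - p v) -> supply p v <= supply q v.
Proof.
move=> max_v; rewrite /supply /netout lerB //; apply: ler_sum => a /eqP end_v;
  apply: pot_flow_le; rewrite end_v.
- by have := max_v (hd a); lra.
- by have := max_v (tl a); lra.
Qed.

Lemma supply_cst (c : R) v : supply (fun=> c) v = 0.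
Proof.
by rewrite /supply /netout !big1 ?subr0 // => a _; rewrite /pot_flow subrr mul0r spow0.
Qed.

Lemma supplyZ (L : R) (p : V -> R) v :
  0 <= L -> supply (fun w => L * p w) v = powR L r^-1 * supply p v.
Proof.
move=> L_ge0; rewrite /supply -netoutZ /netout.
by congr (_ - _); apply: eq_bigr => a _; rewrite /pot_flow -mulrBr -mulrA spowMl ?invr_gt0.
Qed.

Definition update (p : V -> R) v x : V -> R := fun w => if w == v then x else p w.

Lemma update_id (p : V -> R) v : update p v (p v) = p.
Proof. by apply: funext => w; rewrite /update; case: eqP => // ->. Qed.

Lemma supply_update_cont (p : V -> R) v t : cont_at (fun x => supply (update p v x) v) t.
Proof.
have shift a c : cont_at (fun x => spow r^-1 ((x - c) / beta a)) t.
  apply: (@cont_at_inc_can _ _ (fun y => spow r y * beta a + c)) => [x y xy|y].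
    by rewrite spow_lt ?invr_gt0 // ltr_pM2r ?invr_gt0 // ltrD2r.
  by rewrite addrK mulfK ?gt_eqF // spowK ?gt_eqF.
pose k x a := pot_flow (update p v x) a.
apply: (@eq_cont_at _ (fun x => \sum_(a | tl a == v) k x a + \sum_(a | hd a == v) - k x a)).
  by move=> x; rewrite sumrN.
apply: cont_atD; apply: cont_at_sum => a /eqP end_v; rewrite /k /pot_flow /update end_v eqxx.
- case: eqP => _; last exact: shift.
  by apply: eq_cont_at (cont_at_cst 0 t) => x; rewrite subrr mul0r spow0.
- case: eqP => _.
    by apply: eq_cont_at (cont_at_cst 0 t) => x; rewrite subrr mul0r spow0 oppr0.
  by apply: eq_cont_at (shift a (p (tl a))) => x; rewrite -spowN -mulNr opprB.
Qed.

Lemma disjoint_setI_setD (B C X : {set V}) : [disjoint B :&: X & C :\: X].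
Proof. by apply/pred0P => w /=; rewrite !inE; case: (w \in X); rewrite ?andbF. Qed.

Lemma cut_supply_le (p q : V -> R) :
  \sum_(w in [set w | p w < q w]) supply p w <=
  \sum_(w in [set w | p w < q w]) supply q w.
Proof.
rewrite !netout_setE; apply: ler_sum => a _; rewrite !inE.
case: ltP => tl_in; case: ltP => hd_in; rewrite /= ?subrr ?mulr0 ?subr0 ?sub0r //.
  by rewrite !mulr1 pot_flow_le //; lra.
by rewrite !mulrN1 lerN2 pot_flow_le //; lra.
Qed.

Lemma bsum_le_cut (Tp Tm X U : {set V}) (b : V -> R) :
  in_BT Tp Tm b -> Tp :&: X \subset U -> [disjoint U & Tm :\: X] ->
  bsum b X <= bsum b U.
Proof.
move=> [_ b_Tp b_Tm b_out] S_U U_K.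
have le0 v : v \notin Tp -> b v <= 0.
  move=> vTp; case: (boolP (v \in Tm)) => [/b_Tm //|vTm].
  by rewrite b_out // inE negb_or vTp.
have ge0 v : v \notin Tm -> 0 <= b v.
  move=> vTm; case: (boolP (v \in Tp)) => [/b_Tp //|vTp].
  by rewrite b_out // inE negb_or vTp.
rewrite /bsum big_mkcond [X in _ <= X]big_mkcond; apply: ler_sum => v _.
case: (boolP (v \in X)) => vX; case: (boolP (v \in U)) => vU //.
  by apply: le0; apply: contra vU => vTp; apply: (subsetP S_U); rewrite inE vTp.
apply: ge0; apply: contraL vU => vTm.
by rewrite (disjointFl U_K) // inE vTm vX.
Qed.

Section Perron.
Variables S K : {set V}.
Hypothesis SK : [disjoint S & K].

Definition subsolution (p : V -> R) : Prop :=
  [/\ forall w, 0 <= p w <= 1, {in S, forall w, p w = 1}, {in K, forall w, p w = 0} &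
      forall w, w \notin S :|: K -> supply p w <= 0].

Definition perron (w : V) : R := sup [set p w | p in subsolution]%classic.

Lemma subsolution_indicator : subsolution (fun w => (w \in S)%:R).
Proof.
split=> [w|w -> //|w /(disjointFl SK) -> //|w].
  by case: (w \in S); rewrite ?lexx ?ler01.
rewrite inE negb_or => /andP[/negbTE wS _]; rewrite -(supply_cst 0 w).
by apply: supply_le => u; rewrite wS subrr sub0r oppr_le0 ler0n.
Qed.

Lemma has_sup_subsolutions w : has_sup [set p w | p in subsolution]%classic.
Proof.
split; first by exists (w \in S)%:R; exists (fun u => (u \in S)%:R);
  first exact: subsolution_indicator.
by exists 1 => _ [p [p01 _ _ _] <-]; case/andP: (p01 w).
Qed.

Lemma perron_ub (p : V -> R) w : subsolution p -> p w <= perron w.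
Proof. by move=> p_sub; apply: sup_upper_bound (has_sup_subsolutions w) _ _; exists p. Qed.

Lemma perron_le1 w : perron w <= 1.
Proof.
apply: ge_sup; first by case: (has_sup_subsolutions w).
by move=> _ [p [p01 _ _ _] <-]; case/andP: (p01 w).
Qed.

Lemma perron_ge0 w : 0 <= perron w.
Proof. by apply: le_trans (perron_ub w subsolution_indicator); rewrite ler0n. Qed.

Lemma perron_S : {in S, forall w, perron w = 1}.
Proof.
move=> w wS; apply/le_anti; rewrite perron_le1 /=.
by have := perron_ub w subsolution_indicator; rewrite wS.
Qed.

Lemma perron_K : {in K, forall w, perron w = 0}.
Proof.
move=> w wK; apply/le_anti; rewrite perron_ge0 andbT.
apply: ge_sup; first by case: (has_sup_subsolutions w).
by move=> _ [p [_ _ p0 _] <-]; rewrite p0.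
Qed.

Lemma supply_perron_le0 v : v \notin S :|: K -> supply perron v <= 0.
Proof.
move=> v_free; rewrite leNgt; apply/negP => supply_gt0.
have [d d_gt0 near] := @cont_at_gt _ _ _ 0 (supply_update_cont perron v (perron v))
  ltac:(by rewrite /= update_id).
have [_ [p p_sub <-]] := sup_adherent d_gt0 (has_sup_subsolutions v).
rewrite -/(perron v) => close.
have pv_le := perron_ub v p_sub.
have : 0 < supply (update perron v (p v)) v.
  by apply: near; rewrite ler0_norm ?subr_le0 // opprB; lra.
rewrite ltNge => /negP; apply; apply: le_trans (supply_le (q := p) _) _.
- move=> w; rewrite /update eqxx subrr.
  by case: eqP => [->|_]; rewrite ?subrr // subr_le0 perron_ub.
- by case: p_sub => _ _ _; apply.
Qed.

Lemma perron_subsolution : subsolution perron.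
Proof.
split=> [w|w /perron_S|w /perron_K|]//; last exact: supply_perron_le0.
by rewrite perron_ge0 perron_le1.
Qed.

Lemma supply_perron_ge0 v : v \notin S :|: K -> 0 <= supply perron v.
Proof.
move=> v_free; rewrite leNgt; apply/negP => supply_lt0.
have v_lt1 : perron v < 1.
  rewrite lt_neqAle perron_le1 andbT; apply: contraTneq supply_lt0 => pv1.
  rewrite -leNgt -(supply_cst 1 v); apply: supply_le => w.
  by rewrite pv1 subrr subr_le0 perron_le1.
have [d d_gt0 near] := @cont_at_lt _ _ _ 0 (supply_update_cont perron v (perron v))
  ltac:(by rewrite /= update_id).
pose x := Num.min (perron v + d / 2) 1.
have x_gt : perron v < x by rewrite lt_min v_lt1 andbT ltrDl divr_gt0.
have : subsolution (update perron v x).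
  have [v_S v_K] : v \notin S /\ v \notin K by move: v_free; rewrite inE negb_or => /andP.
  split=> [w|w wS|w wK|w w_free]; rewrite /update.
  - case: eqP => _; last by rewrite perron_ge0 perron_le1.
    by rewrite ge_min lexx orbT andbT (le_trans (perron_ge0 v) (ltW x_gt)).
  - by case: eqP => [wv|_]; [rewrite -wv wS in v_S | exact: perron_S].
  - by case: eqP => [wv|_]; [rewrite -wv wK in v_K | exact: perron_K].
  case: (eqVneq w v) => [->|wv].
    rewrite ltW // near // gtr0_norm ?subr_gt0 //.
    have : x <= perron v + d / 2 by rewrite ge_min lexx.
    by have : 0 < d by []; lra.
  apply: le_trans (supply_perron_le0 w_free); apply: supply_le => u.
  rewrite /update (negbTE wv) subrr.
  by case: eqP => [->|_]; rewrite ?subrr // subr_le0 ltW.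
by move/(perron_ub v); rewrite /update eqxx leNgt x_gt.
Qed.

Lemma supply_perron_free v : v \notin S :|: K -> supply perron v = 0.
Proof. by move=> v_free; apply/le_anti; rewrite supply_perron_le0 ?supply_perron_ge0. Qed.

Lemma supply_perron_S_ge0 : {in S, forall v, 0 <= supply perron v}.
Proof.
move=> v vS; rewrite -(supply_cst 1 v); apply: supply_le => w.
by rewrite (perron_S vS) subrr subr_le0 perron_le1.
Qed.

Lemma supply_perron_K_le0 : {in K, forall v, supply perron v <= 0}.
Proof.
move=> v vK; rewrite -(supply_cst 0 v); apply: supply_le => w.
by rewrite (perron_K vK) subrr sub0r oppr_le0 perron_ge0.
Qed.

Lemma supply_perron_gt0 v : 0 < supply perron v -> v \in S.
Proof.
move=> supply_gt0; case: (boolP (v \in S)) => // vS; move: supply_gt0.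
have [/supply_perron_K_le0|vK] := boolP (v \in K); first by rewrite ltNge => ->.
by rewrite supply_perron_free ?ltxx // inE negb_or vS.
Qed.

Lemma supply_perron_lt0 v : supply perron v < 0 -> v \in K.
Proof.
move=> supply_lt0; case: (boolP (v \in K)) => // vK; move: supply_lt0.
have [/supply_perron_S_ge0|vS] := boolP (v \in S); first by rewrite ltNge => ->.
by rewrite supply_perron_free ?ltxx // inE negb_or vS.
Qed.

End Perron.

Lemma bsum_le_perron_outflow (Tp Tm X : {set V}) (b : V -> R) (f : A -> R)
    (pi : V -> R) (L : R) :
  in_BT Tp Tm b -> pb_transshipment tl hd beta r b f pi ->
  (forall v, 0 <= pi v < L) -> 0 <= L ->
  bsum b X <= powR L r^-1 *
    \sum_(w in Tp :&: X) supply (perron (Tp :&: X) (Tm :\: X)) w.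
Proof.
move=> bT fpi pi_range L_ge0.
set S := Tp :&: X; set K := Tm :\: X.
have SK : [disjoint S & K] := disjoint_setI_setD Tp Tm X.
pose U := [set w | pi w < L * perron S K w].
have S_U : S \subset U.
  apply/subsetP => w wS; rewrite inE perron_S // mulr1.
  by case/andP: (pi_range w).
have U_K : [disjoint U & K].
  apply/pred0P => w /=; rewrite inE; case: (boolP (w \in K)) => [wK|]; rewrite ?andbF //.
  by rewrite perron_K // mulr0 ltNge; case/andP: (pi_range w) => ->.
apply: (le_trans (bsum_le_cut bT S_U U_K)).
have -> : bsum b U = \sum_(w in U) supply pi w.
  by apply: eq_bigr => w _; case: (fpi) => _ <-; rewrite (pot_flowE fpi).
apply: (le_trans (cut_supply_le pi (fun w => L * perron S K w))).
rewrite (big_setID S) /= (setIidPr S_U) [X in _ + X]big1 => [|w /setDP[wU wS]].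
  by rewrite addr0 mulr_sumr; apply: ler_sum => w _; rewrite supplyZ.
rewrite supplyZ // supply_perron_free ?mulr0 // inE negb_or wS /=.
by apply: contraL wU => /(disjointFl U_K) ->.
Qed.

End PotentialFlow.

Theorem theorem4 (R : realType) (V A : finType) (tl hd : A -> V)
    (beta : A -> R) (r : R) (Tp Tm : {set V}) (b : V -> R)
    (f : A -> R) (pi : V -> R) (pibar : R) :
  pb_network tl hd beta r ->
  [disjoint Tp & Tm] ->
  in_BT Tp Tm b ->
  0 < pibar ->
  pb_transshipment tl hd beta r b f pi ->
  (forall v, 0 <= pi v <= pibar) ->
  forall X : {set V}, X \subset Tp :|: Tm -> 0 <= bsum b X ->
  exists (b' : V -> R) (f' : A -> R) (pi' : V -> R),
    [/\ balanced b',
        pb_transshipment tl hd beta r b' f' pi' /\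
        (forall v, 0 <= pi' v <= pibar),
        (forall v, 0 < b' v -> v \in Tp :&: X),
        (forall v, b' v < 0 -> v \in Tm :\: X) &
        bsum b' (Tp :&: X) = bsum b X].
Proof.
move=> [_ _ beta_gt0 r_gt0] _ bT pibar_gt0 fpi pi_range X _ bX_ge0.
have SK := disjoint_setI_setD Tp Tm X.
pose psi := perron tl hd beta r (Tp :&: X) (Tm :\: X).
pose F := \sum_(w in Tp :&: X) supply tl hd beta r psi w.
have F_ge0 : 0 <= F by apply: sumr_ge0 => w; apply: supply_perron_S_ge0.
have [qF L_le] : bsum b X / F * F = bsum b X /\ powR (bsum b X / F) r <= pibar.
  apply: scaling_factor (ltW pibar_gt0) _ => // L pibar_L.
  apply: bsum_le_perron_outflow bT fpi _ _ => // [v|]; last by lra.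
  by case/andP: (pi_range v) => -> /le_lt_trans ->.
set q := bsum b X / F; set L := powR q r.
have q_ge0 : 0 <= q by rewrite divr_ge0.
have sign_scaled s : (0 < q * s -> 0 < s) /\ (q * s < 0 -> s < 0).
  by split; apply: contraTT; rewrite -!leNgt => ?; [exact: mulr_ge0_le0 | exact: mulr_ge0].
have supply_L v : supply tl hd beta r (fun w => L * psi w) v = q * supply tl hd beta r psi v.
  by rewrite supplyZ ?powR_ge0 // -powRrM mulfV ?gt_eqF // powRr1.
exists (supply tl hd beta r (fun w => L * psi w)), (pot_flow tl hd beta r (fun w => L * psi w)).
exists (fun w => L * psi w); split.
- exact: balanced_netout.
- split=> [|v]; first exact: pot_flow_transshipment.
  rewrite mulr_ge0 ?powR_ge0 ?perron_ge0 //=; apply: le_trans L_le.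
  by rewrite ler_piMr ?powR_ge0 ?perron_le1.
- by move=> v; rewrite supply_L => /(sign_scaled _).1 /(supply_perron_gt0 beta_gt0 r_gt0 SK).
- by move=> v; rewrite supply_L => /(sign_scaled _).2 /(supply_perron_lt0 beta_gt0 r_gt0 SK).
- by rewrite /bsum; under eq_bigr do rewrite supply_L; rewrite -mulr_sumr.
Qed.
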